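(* Let $M$ be a finite set, let $\mathcal{X}\subseteq\mathcal{P}(M)$ be a closure system on $M$, and let $\mathcal{M}=\{N_i\mid i\in I\}\subseteq\mathcal{P}(M)$ be a consortial domain on $M$. If $\mathcal{M}^{*}:=\mathcal{M}\cup\{M\}$ is a closure system on $M$, then $\bigcup_{N\in\mathcal{M}^{*}}\mathcal{X}_N$ is a closure system on $M$.
   Context: A closure system on $M$ is a family of subsets of $M$ containing $M$ and closed under intersections. A consortial domain on $M$ is a family $\mathcal{M}=\{N_i\mid i\in I\}\subseteq\mathcal{P}(M)$ with $\bigcup_{i\in I}N_i=M$. For $N\subseteq M$, $\mathcal{X}_N:=\{X\cap N\mid X\in\mathcal{X}\}$. *)

From mathcomp Require Import all_boot.
Set Implicit Arguments. Unset Strict Implicit. Unset Printing Implicit Defensive.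

Definition closure_system (T : finType) (M : {set T}) (X : {set {set T}}) : Prop :=
  [/\ X \subset powerset M,
      M \in X &
      forall F : {set {set T}}, F \subset X -> F != set0 ->
        \bigcap_(A in F) A \in X].

Definition consortial_domain (T : finType) (M : {set T}) (D : {set {set T}}) : Prop :=
  D \subset powerset M /\ \bigcup_(N in D) N = M.

Definition trace (T : finType) (X : {set {set T}}) (N : {set T}) : {set {set T}} :=
  [set A :&: N | A in X].

From mathcomp Require Import all_boot.
Set Implicit Arguments. Unset Strict Implicit. Unset Printing Implicit Defensive.

(* Every member B of the union of the traces is recovered from its two closures,
   B = cl_X(B) ∩ cl_M*(B), since B = A ∩ N forces cl_X(B) ⊆ A and cl_M*(B) ⊆ N.
   Hence the intersection of a nonempty subfamily F is (∩_{B∈F} cl_X(B)) ∩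
   (∩_{B∈F} cl_M*(B)), the trace on a member of M* of a member of X. *)

Section Closure.

Variable T : finType.
Implicit Types (M A B N : {set T}) (C D F X : {set {set T}}).

Definition cl C B : {set T} := \bigcap_(A in [set A in C | B \subset A]) A.

Lemma sub_cl C B : B \subset cl C B.
Proof. by apply/bigcapsP=> A; rewrite inE => /andP[]. Qed.

Lemma cl_min C A B : A \in C -> B \subset A -> cl C B \subset A.
Proof. by move=> AinC BA; apply: (bigcap_inf A); rewrite inE AinC. Qed.

Lemma closure_system_sub M C A : closure_system M C -> A \in C -> A \subset M.
Proof. by case=> /subsetP sub_pow _ _ /sub_pow; rewrite inE. Qed.

Lemma closure_system_bigcap M C F (f : {set T} -> {set T}) :
  closure_system M C -> F != set0 -> {in F, forall B, f B \in C} ->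
  \bigcap_(B in F) f B \in C.
Proof.
case=> _ _ capC /set0Pn[B0 B0F] fC.
rewrite -(big_imset_idem f _ id (@setIid T)); apply: capC.
  by apply/subsetP=> _ /imsetP[B BF ->]; apply: fC.
by apply/set0Pn; exists (f B0); apply: imset_f.
Qed.

Lemma cl_in M C B : closure_system M C -> B \subset M -> cl C B \in C.
Proof.
case=> _ MC capC BM; apply: capC; first by apply/subsetP=> A; rewrite inE => /andP[].
by apply/set0Pn; exists M; rewrite inE MC.
Qed.

Lemma trace_in_bigcup X D A N :
  A \in X -> N \in D -> A :&: N \in \bigcup_(N' in D) trace X N'.
Proof. by move=> AX ND; apply/bigcupP; exists N => //; apply: imset_f. Qed.

Lemma bigcup_trace_clI X D B :
  B \in \bigcup_(N in D) trace X N -> B = cl X B :&: cl D B.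
Proof.
case/bigcupP=> N ND /imsetP[A AX ->]; apply/eqP.
by rewrite eqEsubset subsetI !sub_cl setISS // cl_min // (subsetIl, subsetIr).
Qed.

End Closure.

Theorem mainTheorem3 (T : finType) (M : {set T}) (X D : {set {set T}}) :
  closure_system M X ->
  consortial_domain M D ->
  closure_system M (D :|: [set M]) ->
  closure_system M (\bigcup_(N in D :|: [set M]) trace X N).
Proof.
move=> clX _ clD; set Ds := D :|: [set M]; set U := \bigcup_(N in Ds) trace X N.
have MDs : M \in Ds by rewrite !inE eqxx orbT.
have UM B : B \in U -> B \subset M.
  by case/bigcupP=> N _ /imsetP[A /(closure_system_sub clX) AM ->]; rewrite subIset ?AM.
split.
- by apply/subsetP=> B /UM; rewrite inE.
- by rewrite -[M in M \in U]setIid trace_in_bigcup //; case: clX.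
move=> F /subsetP FU F0.
have -> : \bigcap_(B in F) B = \bigcap_(B in F) cl X B :&: \bigcap_(B in F) cl Ds B.
  by rewrite -big_split; apply: eq_bigr=> B /FU /bigcup_trace_clI.
apply: trace_in_bigcup.
- by apply: (closure_system_bigcap clX F0) => B /FU /UM /(cl_in clX).
- by apply: (closure_system_bigcap clD F0) => B /FU /UM /(cl_in clD).
Qed.
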